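(* Let $p,q\ge 0$ with $p+q=3$. Equip $\mathcal{G}(p,q)$ with the bilinear product $$x\bullet y = x_+y_+ + \widetilde{y_-}\,x_- + y_-x_+ + x_-\widetilde{y_+},$$ and define $N:\mathcal{G}(p,q)\to\mathbb{R}$ by $N(x)=\langle x\bullet x^*\rangle_0$. (In fact $x\bullet x^*$ is itself a real scalar, so $x\bullet x^* = N(x)\,1$.) Then the following hold. 1. $1$ is a two-sided unit for $\bullet$. 2. $N$ is a nondegenerate real quadratic form on the 8-dimensional space $\mathcal{G}(p,q)$. 3. $N(x\bullet y)=N(x)N(y)$ for all $x,y\in\mathcal{G}(p,q)$. Consequently $(\mathcal{G}(p,q),\bullet,N)$ is a Hurwitz algebra, and hence it is isomorphic either to the octonions $\mathbb{O}$ or to the split-octonions $\mathbb{O}_s$.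
   Context: Let $p,q\ge0$ with $p+q=3$. $\mathcal{G}(p,q)$ denotes the real Clifford (geometric) algebra of $\mathbb{R}^3$ with a nondegenerate quadratic form of signature $(p,q)$. It is the associative unital real algebra generated by an orthonormal basis $e_1,e_2,e_3$ subject to $e_i^2=\lambda_i$ and $e_ie_j=-e_je_i$ for $i\ne j$. Here $\lambda_i\in\{\pm1\}$, and exactly $p$ of the $\lambda_i$ equal $+1$. The algebra is 8-dimensional with basis $1,e_1,e_2,e_3,e_1e_2,e_2e_3,e_1e_3,e_1e_2e_3$. Juxtaposition denotes the (associative) geometric product. $\langle x\rangle_k$ denotes the grade-$k$ part of $x$. We write $x_+=\langle x\rangle_0+\langle x\rangle_2$ (even part) and $x_-=\langle x\rangle_1+\langle x\rangle_3$ (odd part). Reversion $x\mapsto x^\dagger$ is the linear anti-automorphism fixing vectors; it multiplies grade $k$ by $(-1)^{k(k-1)/2}$. Inversion is $\bar x=x_+-x_-$. Clifford conjugation is $\tilde x=(\bar x)^\dagger$; it multiplies grades $0,1,2,3$ by $+1,-1,-1,+1$ respectively. Full grade inversion is $x^*=2\langle x\rangle_0-x$, which equals $x_+^\dagger - x_-$. A Hurwitz algebra is a real algebra with a two-sided unit carrying a nondegenerate quadratic form $n$ satisfying $n(xy)=n(x)n(y)$ for all $x,y$. By Hurwitz's theorem, the 8-dimensional ones are exactly the octonions $\mathbb{O}$ and the split-octonions $\mathbb{O}_s$, up to isomorphism. *)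

From HB Require Import structures.
From mathcomp Require Import all_boot all_order all_algebra.
From mathcomp Require Import reals.
Set Implicit Arguments. Unset Strict Implicit. Unset Printing Implicit Defensive.
Import Order.TTheory GRing.Theory Num.Theory.
Local Open Scope ring_scope.

(* ---------- The Clifford algebra G(p,q) of R^3 ----------
   A multivector is a function from blades (subsets A of {e_1,e_2,e_3},
   indexed by {set 'I_3}) to coefficients; the blade A = {i1 < ... < ik}
   stands for e_{i1} ... e_{ik}; its grade is #|A|.  The signature is
   encoded by lam : 'I_3 -> R with e_i^2 = lam i in {1,-1}. *)

Notation mv R := {ffun {set 'I_3} -> R^o}.

Section Clifford.
Variable R : realType.
Variable lam : 'I_3 -> R.

Definition symd (A B : {set 'I_3}) : {set 'I_3} := (A :\: B) :|: (B :\: A).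

(* e_A e_B = bsign A B * e_(A symd B) *)
Definition bsign (A B : {set 'I_3}) : R :=
  (-1) ^+ #|[set ab : 'I_3 * 'I_3 |
              (ab.1 \in A) && (ab.2 \in B) && (nat_of_ord ab.2 < nat_of_ord ab.1)%N]|
  * \prod_(i in A :&: B) lam i.

Definition gp (x y : mv R) : mv R :=
  [ffun C => \sum_(A : {set 'I_3}) \sum_(B : {set 'I_3} | symd A B == C)
               bsign A B * x A * y B].

Definition gone : mv R := [ffun A : {set 'I_3} => (A == set0)%:R].

Definition gradek (k : nat) (x : mv R) : mv R :=
  [ffun A : {set 'I_3} => if #|A| == k then x A else 0].
Definition evp (x : mv R) : mv R := [ffun A : {set 'I_3} => if ~~ odd #|A| then x A else 0].
Definition odp (x : mv R) : mv R := [ffun A : {set 'I_3} => if odd #|A| then x A else 0].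
Definition grev (x : mv R) : mv R := [ffun A : {set 'I_3} => (-1) ^+ 'C(#|A|, 2) * x A].
Definition ginv (x : mv R) : mv R := evp x - odp x.
Definition cconj (x : mv R) : mv R := grev (ginv x).
Definition gstar (x : mv R) : mv R := 2%:R *: gradek 0 x - x.

Definition bullet (x y : mv R) : mv R :=
  gp (evp x) (evp y) + gp (cconj (odp y)) (odp x)
  + gp (odp y) (evp x) + gp (odp x) (cconj (evp y)).

Definition Nf (x : mv R) : R := bullet x (gstar x) set0.

End Clifford.

Section Hurwitz.
Variables (R : realType) (V : lmodType R).

Definition polar (N : V -> R) (x y : V) : R := N (x + y) - N x - N y.

(* N is a quadratic form: N(a x) = a^2 N(x) and its polar form is bilinear
   (it is symmetric by construction, so linearity in the second argument
    suffices). *)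
Definition is_quad_form (N : V -> R) : Prop :=
  (forall (a : R) (x : V), N (a *: x) = a ^+ 2 * N x) /\
  (forall (x y z : V) (a : R), polar N x (a *: y + z) = a * polar N x y + polar N x z).

Definition nondegenerate_qf (N : V -> R) : Prop :=
  forall x : V, (forall y : V, polar N x y = 0) -> x = 0.

Definition bilinear_op (mul : V -> V -> V) : Prop :=
  (forall (a : R) (x y z : V), mul (a *: x + y) z = a *: mul x z + mul y z) /\
  (forall (a : R) (x y z : V), mul z (a *: x + y) = a *: mul z x + mul z y).

Definition is_hurwitz (mul : V -> V -> V) (e : V) (N : V -> R) : Prop :=
  [/\ bilinear_op mul,
      (forall x, mul e x = x /\ mul x e = x),
      is_quad_form N, nondegenerate_qf N &
      (forall x y, N (mul x y) = N x * N y)].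

End Hurwitz.

Section Octonions.
Variable R : realType.

Notation quat := {ffun 'I_4 -> R^o}.
Definition qc (x : quat) (k : nat) : R := x (inord k).

(* Hamilton product, basis 1,i,j,k with ij = k, jk = i, ki = j *)
Definition qmul (a b : quat) : quat :=
  [ffun n : 'I_4 => match nat_of_ord n with
   | 0 => qc a 0 * qc b 0 - qc a 1 * qc b 1 - qc a 2 * qc b 2 - qc a 3 * qc b 3
   | 1 => qc a 0 * qc b 1 + qc a 1 * qc b 0 + qc a 2 * qc b 3 - qc a 3 * qc b 2
   | 2 => qc a 0 * qc b 2 - qc a 1 * qc b 3 + qc a 2 * qc b 0 + qc a 3 * qc b 1
   | _ => qc a 0 * qc b 3 + qc a 1 * qc b 2 - qc a 2 * qc b 1 + qc a 3 * qc b 0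
   end].
Definition qconj (a : quat) : quat :=
  [ffun n : 'I_4 => if nat_of_ord n == 0%N then a n else - a n].

Notation oct := {ffun 'I_8 -> R^o}.
Definition olo (x : oct) : quat := [ffun i : 'I_4 => x (lshift 4 i)].
Definition ohi (x : oct) : quat := [ffun i : 'I_4 => x (rshift 4 i)].
Definition opair (a b : quat) : oct :=
  [ffun i : 'I_8 => match split (i : 'I_(4 + 4)) with inl j => a j | inr j => b j end].

(* Cayley-Dickson doubling of the quaternions:
   (a,b)(c,d) = (ac + gam * conj(d) b, d a + b conj(c));
   gam = -1 gives the octonions O, gam = 1 the split-octonions O_s. *)
Definition cdmul (gam : R) (x y : oct) : oct :=
  opair (qmul (olo x) (olo y) + gam *: qmul (qconj (ohi y)) (ohi x))
        (qmul (ohi y) (olo x) + qmul (ohi x) (qconj (olo y))).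

Definition omul : oct -> oct -> oct := cdmul (-1).
Definition somul : oct -> oct -> oct := cdmul 1.

End Octonions.

Definition alg_iso (R : realType) (V W : lmodType R)
  (mulV : V -> V -> V) (mulW : W -> W -> W) : Prop :=
  exists f : V -> W,
    [/\ bijective f,
        (forall (a : R) (x y : V), f (a *: x + y) = a *: f x + f y) &
        (forall x y : V, f (mulV x y) = mulW (f x) (f y))].

From HB Require Import structures.
From mathcomp Require Import all_boot all_order all_algebra.
From mathcomp Require Import reals boolp.
From mathcomp Require Import ring.
Set Implicit Arguments. Unset Strict Implicit. Unset Printing Implicit Defensive.
Import Order.TTheory GRing.Theory Num.Theory.
Local Open Scope ring_scope.

(* In the blade basis e_A the product x • y is given by explicit bilinear formulas, and N is the
   diagonal form N(x) = sum_A lam_A x_A^2 with lam_A = prod_(i in A) lam_i, which is nondegenerate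
   because every lam_A is 1 or -1.  The identities x • x^* = N(x) 1 (for any lam) and
   N(x • y) = N(x) N(y) (once lam_i^2 = 1) are then polynomial identities in the coordinates. *)

Lemma scaler_regular (R : pzSemiRingType) (a : R) (b : R^o) : a *: b = a * b.
Proof. by []. Qed.

Section DiagonalForm.
Variables (R : realType) (I : finType) (w : I -> R).

Definition diag_form (x : {ffun I -> R^o}) : R := \sum_i w i * x i ^+ 2.

Lemma polar_diag_form x y : polar diag_form x y = 2 * \sum_i w i * x i * y i.
Proof.
rewrite /polar /diag_form -!sumrB mulr_sumr; apply: eq_bigr => i _; rewrite ffunE; ring.
Qed.

Lemma diag_form_quad : is_quad_form diag_form.
Proof.
split=> [a x | x y z a].
  by rewrite /diag_form mulr_sumr; apply: eq_bigr => i _; rewrite ffunE scaler_regular; ring.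
rewrite !polar_diag_form mulrCA -mulrDr; congr (2 * _).
rewrite mulr_sumr -big_split /=; apply: eq_bigr => i _; rewrite !ffunE scaler_regular; ring.
Qed.

Lemma diag_form_nondegenerate : (forall i, w i != 0) -> nondegenerate_qf diag_form.
Proof.
move=> w_neq0 x x_orth; apply/ffunP => i; rewrite ffunE.
have := x_orth [ffun j => (j == i)%:R]; rewrite polar_diag_form (bigD1 i) //= big1 => [|j ji].
  rewrite !ffunE eqxx addr0 mulr1 => /eqP.
  by rewrite !mulf_eq0 pnatr_eq0 (negPf (w_neq0 i)) => /eqP.
by rewrite ffunE (negPf ji) mulr0.
Qed.

End DiagonalForm.

Definition i0 : 'I_3 := @Ordinal 3 0 isT.
Definition i1 : 'I_3 := @Ordinal 3 1 isT.
Definition i2 : 'I_3 := @Ordinal 3 2 isT.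

Lemma big_ord3 (R : Type) (idx : R) (op : Monoid.law idx) (F : 'I_3 -> R) :
  \big[op/idx]_(i < 3) F i = op (op (F i0) (F i1)) (F i2).
Proof.
rewrite !big_ord_recl big_ord0 Monoid.mulm1 Monoid.mulmA.
by congr (op (op (F _) (F _)) (F _)); apply: val_inj.
Qed.

Lemma ord3_ind (P : 'I_3 -> Prop) : P i0 -> P i1 -> P i2 -> forall i, P i.
Proof.
move=> P0 P1 P2 [[|[|[|k]]] lt_k3] //.
- by rewrite (_ : Ordinal lt_k3 = i0) //; apply: val_inj.
- by rewrite (_ : Ordinal lt_k3 = i1) //; apply: val_inj.
- by rewrite (_ : Ordinal lt_k3 = i2) //; apply: val_inj.
Qed.

Definition blade (b0 b1 b2 : bool) : {set 'I_3} :=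
  [set i : 'I_3 | [|| (val i == 0%N) && b0, (val i == 1%N) && b1 | (val i == 2%N) && b2]].

(* The paper's e_1, e_2, e_3 are indexed by i0, i1, i2. *)
Notation e0 := (blade false false false).
Notation e1 := (blade true false false).
Notation e2 := (blade false true false).
Notation e3 := (blade false false true).
Notation e12 := (blade true true false).
Notation e13 := (blade true false true).
Notation e23 := (blade false true true).
Notation e123 := (blade true true true).

Lemma in_blade i b0 b1 b2 : (i \in blade b0 b1 b2) =
  [|| (val i == 0%N) && b0, (val i == 1%N) && b1 | (val i == 2%N) && b2].
Proof. by rewrite inE. Qed.

Lemma blade_of (A : {set 'I_3}) : A = blade (i0 \in A) (i1 \in A) (i2 \in A).
Proof. by apply/setP; apply: ord3_ind; rewrite in_blade /=; case: (_ \in A). Qed.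

Lemma set0_blade : set0 = e0.
Proof. by apply/setP => i; rewrite !inE !andbF. Qed.

Lemma eq_blade a0 a1 a2 b0 b1 b2 :
  (blade a0 a1 a2 == blade b0 b1 b2) = [&& a0 == b0, a1 == b1 & a2 == b2].
Proof.
apply/eqP/and3P => [/setP eqAB | [/eqP-> /eqP-> /eqP->] //].
move: (eqAB i0) (eqAB i1) (eqAB i2); rewrite !in_blade /= !orbF => -> -> ->.
by split.
Qed.

Lemma card_blade b0 b1 b2 : #|blade b0 b1 b2| = (b0 + b1 + b2)%N.
Proof.
rewrite -sum1_card big_mkcond big_ord3 !in_blade /=.
by case: b0; case: b1; case: b2.
Qed.

Lemma symd_blade a0 a1 a2 b0 b1 b2 :
  symd (blade a0 a1 a2) (blade b0 b1 b2) = blade (a0 (+) b0) (a1 (+) b1) (a2 (+) b2).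
Proof.
apply/setP; apply: ord3_ind; rewrite /symd !inE /=;
  by case: a0; case: a1; case: a2; case: b0; case: b1; case: b2.
Qed.

Lemma symd_eq A B C : (symd A B == C) = (B == symd A C).
Proof.
have xorC a b c : (a (+) b == c) = (b == a (+) c) by case: a; case: b; case: c.
by rewrite (blade_of A) (blade_of B) (blade_of C) !symd_blade !eq_blade !xorC.
Qed.

Lemma sum_blades (V : nmodType) (F : {set 'I_3} -> V) :
  \sum_(A : {set 'I_3}) F A =
  \sum_(b0 : bool) \sum_(b1 : bool) \sum_(b2 : bool) F (blade b0 b1 b2).
Proof.
rewrite pair_bigA pair_bigA /=.
rewrite (reindex (fun b : bool * bool * bool => blade b.1.1 b.1.2 b.2)) //=.
exists (fun A : {set 'I_3} => (i0 \in A, i1 \in A, i2 \in A)) => [[[b0 b1] b2] _ | A _] /=.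
  by rewrite !in_blade /= !orbF.
by rewrite -blade_of.
Qed.

Section CayleyDickson.
Variable R : realType.
Local Notation oct := {ffun 'I_8 -> R^o}.

Lemma oct_ext (u v : oct) :
  u (inord 0) = v (inord 0) -> u (inord 1) = v (inord 1) ->
  u (inord 2) = v (inord 2) -> u (inord 3) = v (inord 3) ->
  u (inord 4) = v (inord 4) -> u (inord 5) = v (inord 5) ->
  u (inord 6) = v (inord 6) -> u (inord 7) = v (inord 7) -> u = v.
Proof.
move=> eq0 eq1 eq2 eq3 eq4 eq5 eq6 eq7; apply/ffunP => -[k lt_k8].
by rewrite -(inord_val (Ordinal lt_k8)) /=; do 8 case: k lt_k8 => [|k] lt_k8 //.
Qed.

Lemma opair_lshift (a b : {ffun 'I_4 -> R^o}) (k : 'I_4) : opair a b (lshift 4 k) = a k.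
Proof. by rewrite ffunE (unsplitK (inl k)). Qed.

Lemma opair_rshift (a b : {ffun 'I_4 -> R^o}) (k : 'I_4) : opair a b (rshift 4 k) = b k.
Proof. by rewrite ffunE (unsplitK (inr k)). Qed.

Lemma lshift_inord k : (k < 4)%N -> lshift 4 (inord k : 'I_4) = inord k :> 'I_8.
Proof. by move=> lt_k4; apply: val_inj; rewrite /= !inordK // (leq_trans lt_k4). Qed.

Lemma rshift_inord k : (k < 4)%N -> rshift 4 (inord k : 'I_4) = inord k.+4 :> 'I_8.
Proof. by move=> lt_k4; apply: val_inj; rewrite /= !inordK // addnC addn4. Qed.

Ltac cdmul_coord :=
  rewrite /cdmul ?opair_lshift ?opair_rshift /qmul /qconj /qc /olo /ohi
          !ffunE !inordK //= ?ffunE ?inordK //= ?lshift_inord // ?rshift_inord //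
          ?scaler_regular; ring.

Variable (g : R).
Implicit Types u v : oct.

Lemma cdmul0 u v : cdmul g u v (inord 0) =
  u (inord 0) * v (inord 0) - u (inord 1) * v (inord 1) - u (inord 2) * v (inord 2)
  - u (inord 3) * v (inord 3) + g * u (inord 4) * v (inord 4)
  + g * u (inord 5) * v (inord 5) + g * u (inord 6) * v (inord 6)
  + g * u (inord 7) * v (inord 7).
Proof. rewrite -[in LHS](lshift_inord (k := 0)) //; cdmul_coord. Qed.

Lemma cdmul1 u v : cdmul g u v (inord 1) =
  u (inord 0) * v (inord 1) + u (inord 1) * v (inord 0) + u (inord 2) * v (inord 3)
  - u (inord 3) * v (inord 2) - g * u (inord 4) * v (inord 5)
  + g * u (inord 5) * v (inord 4) + g * u (inord 6) * v (inord 7)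
  - g * u (inord 7) * v (inord 6).
Proof. rewrite -[in LHS](lshift_inord (k := 1)) //; cdmul_coord. Qed.

Lemma cdmul2 u v : cdmul g u v (inord 2) =
  u (inord 0) * v (inord 2) - u (inord 1) * v (inord 3) + u (inord 2) * v (inord 0)
  + u (inord 3) * v (inord 1) - g * u (inord 4) * v (inord 6)
  - g * u (inord 5) * v (inord 7) + g * u (inord 6) * v (inord 4)
  + g * u (inord 7) * v (inord 5).
Proof. rewrite -[in LHS](lshift_inord (k := 2)) //; cdmul_coord. Qed.

Lemma cdmul3 u v : cdmul g u v (inord 3) =
  u (inord 0) * v (inord 3) + u (inord 1) * v (inord 2) - u (inord 2) * v (inord 1)
  + u (inord 3) * v (inord 0) - g * u (inord 4) * v (inord 7)
  + g * u (inord 5) * v (inord 6) - g * u (inord 6) * v (inord 5)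
  + g * u (inord 7) * v (inord 4).
Proof. rewrite -[in LHS](lshift_inord (k := 3)) //; cdmul_coord. Qed.

Lemma cdmul4 u v : cdmul g u v (inord 4) =
  u (inord 0) * v (inord 4) - u (inord 1) * v (inord 5) - u (inord 2) * v (inord 6)
  - u (inord 3) * v (inord 7) + u (inord 4) * v (inord 0) + u (inord 5) * v (inord 1)
  + u (inord 6) * v (inord 2) + u (inord 7) * v (inord 3).
Proof. rewrite -[in LHS](rshift_inord (k := 0)) //; cdmul_coord. Qed.

Lemma cdmul5 u v : cdmul g u v (inord 5) =
  u (inord 0) * v (inord 5) + u (inord 1) * v (inord 4) - u (inord 2) * v (inord 7)
  + u (inord 3) * v (inord 6) - u (inord 4) * v (inord 1) + u (inord 5) * v (inord 0)
  - u (inord 6) * v (inord 3) + u (inord 7) * v (inord 2).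
Proof. rewrite -[in LHS](rshift_inord (k := 1)) //; cdmul_coord. Qed.

Lemma cdmul6 u v : cdmul g u v (inord 6) =
  u (inord 0) * v (inord 6) + u (inord 1) * v (inord 7) + u (inord 2) * v (inord 4)
  - u (inord 3) * v (inord 5) - u (inord 4) * v (inord 2) + u (inord 5) * v (inord 3)
  + u (inord 6) * v (inord 0) - u (inord 7) * v (inord 1).
Proof. rewrite -[in LHS](rshift_inord (k := 2)) //; cdmul_coord. Qed.

Lemma cdmul7 u v : cdmul g u v (inord 7) =
  u (inord 0) * v (inord 7) - u (inord 1) * v (inord 6) + u (inord 2) * v (inord 5)
  + u (inord 3) * v (inord 4) - u (inord 4) * v (inord 3) - u (inord 5) * v (inord 2)
  + u (inord 6) * v (inord 1) + u (inord 7) * v (inord 0).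
Proof. rewrite -[in LHS](rshift_inord (k := 3)) //; cdmul_coord. Qed.

Definition cdmulE := (cdmul0, cdmul1, cdmul2, cdmul3, cdmul4, cdmul5, cdmul6, cdmul7).

End CayleyDickson.

Section Clifford.
Variables (R : realType) (lam : 'I_3 -> R).
Local Notation oct := {ffun 'I_8 -> R^o}.

Lemma bsign_blade a0 a1 a2 b0 b1 b2 :
  bsign lam (blade a0 a1 a2) (blade b0 b1 b2) =
  (-1) ^+ (a1 * b0 + a2 * b0 + a2 * b1)%N *
  ((if a0 && b0 then lam i0 else 1) * (if a1 && b1 then lam i1 else 1) *
   (if a2 && b2 then lam i2 else 1)).
Proof.
have sum_pair (G : 'I_3 * 'I_3 -> nat) : \sum_p G p = \sum_i \sum_j G (i, j).
  by rewrite pair_bigA; apply: eq_bigr => -[].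
rewrite /bsign -sum1_card big_mkcond sum_pair !big_ord3 !inE big_mkcond big_ord3 /= !inE /=.
by case: a0; case: a1; case: a2; case: b0; case: b1; case: b2.
Qed.

Lemma sum_symd (V : nmodType) A C (F : {set 'I_3} -> V) :
  \sum_(B | symd A B == C) F B = F (symd A C).
Proof. by rewrite (eq_bigl (pred1 (symd A C))) ?big_pred1_eq // => B; apply: symd_eq. Qed.

Lemma evp_blade (x : mv R) b0 b1 b2 :
  evp x (blade b0 b1 b2) = if ~~ odd (b0 + b1 + b2)%N then x (blade b0 b1 b2) else 0.
Proof. by rewrite ffunE card_blade. Qed.

Lemma odp_blade (x : mv R) b0 b1 b2 :
  odp x (blade b0 b1 b2) = if odd (b0 + b1 + b2)%N then x (blade b0 b1 b2) else 0.
Proof. by rewrite ffunE card_blade. Qed.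

Lemma cconj_blade (x : mv R) b0 b1 b2 :
  cconj x (blade b0 b1 b2) = (-1) ^+ 'C((b0 + b1 + b2)%N, 2) *
    (if ~~ odd (b0 + b1 + b2)%N then x (blade b0 b1 b2) else - x (blade b0 b1 b2)).
Proof. by rewrite /cconj /grev /ginv !ffunE card_blade; case: odd => /=; ring. Qed.

Ltac bullet_coord :=
  rewrite /bullet !ffunE !sum_blades !big_bool !sum_symd !symd_blade /= !bsign_blade /=
          !cconj_blade !evp_blade !odp_blade /=; ring.

Lemma bullet_e0 (x y : mv R) : bullet lam x y e0 = x e0 * y e0
  - lam i0 * x e1 * y e1 - lam i1 * x e2 * y e2 - lam i2 * x e3 * y e3
  - lam i0 * lam i1 * x e12 * y e12 - lam i0 * lam i2 * x e13 * y e13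
  - lam i1 * lam i2 * x e23 * y e23 - lam i0 * lam i1 * lam i2 * x e123 * y e123.
Proof. bullet_coord. Qed.

Lemma bullet_e1 (x y : mv R) : bullet lam x y e1 =
  x e0 * y e1 + x e1 * y e0 + lam i1 * x e2 * y e12 + lam i2 * x e3 * y e13
  - lam i1 * x e12 * y e2 - lam i2 * x e13 * y e3 - lam i1 * lam i2 * x e23 * y e123
  + lam i1 * lam i2 * x e123 * y e23.
Proof. bullet_coord. Qed.

Lemma bullet_e2 (x y : mv R) : bullet lam x y e2 =
  x e0 * y e2 - lam i0 * x e1 * y e12 + x e2 * y e0 + lam i2 * x e3 * y e23
  + lam i0 * x e12 * y e1 + lam i0 * lam i2 * x e13 * y e123 - lam i2 * x e23 * y e3
  - lam i0 * lam i2 * x e123 * y e13.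
Proof. bullet_coord. Qed.

Lemma bullet_e3 (x y : mv R) : bullet lam x y e3 =
  x e0 * y e3 - lam i0 * x e1 * y e13 - lam i1 * x e2 * y e23 + x e3 * y e0
  - lam i0 * lam i1 * x e12 * y e123 + lam i0 * x e13 * y e1 + lam i1 * x e23 * y e2
  + lam i0 * lam i1 * x e123 * y e12.
Proof. bullet_coord. Qed.

Lemma bullet_e12 (x y : mv R) : bullet lam x y e12 =
  x e0 * y e12 + x e1 * y e2 - x e2 * y e1 + lam i2 * x e3 * y e123 + x e12 * y e0
  - lam i2 * x e13 * y e23 + lam i2 * x e23 * y e13 - lam i2 * x e123 * y e3.
Proof. bullet_coord. Qed.

Lemma bullet_e13 (x y : mv R) : bullet lam x y e13 =
  x e0 * y e13 + x e1 * y e3 - lam i1 * x e2 * y e123 - x e3 * y e1 + lam i1 * x e12 * y e23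
  + x e13 * y e0 - lam i1 * x e23 * y e12 + lam i1 * x e123 * y e2.
Proof. bullet_coord. Qed.

Lemma bullet_e23 (x y : mv R) : bullet lam x y e23 =
  x e0 * y e23 + lam i0 * x e1 * y e123 + x e2 * y e3 - x e3 * y e2 - lam i0 * x e12 * y e13
  + lam i0 * x e13 * y e12 + x e23 * y e0 - lam i0 * x e123 * y e1.
Proof. bullet_coord. Qed.

Lemma bullet_e123 (x y : mv R) : bullet lam x y e123 =
  x e0 * y e123 - x e1 * y e23 + x e2 * y e13 - x e3 * y e12 + x e12 * y e3 - x e13 * y e2
  + x e23 * y e1 + x e123 * y e0.
Proof. bullet_coord. Qed.

Definition bulletE := (bullet_e0, bullet_e1, bullet_e2, bullet_e3,
                       bullet_e12, bullet_e13, bullet_e23, bullet_e123).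

Lemma mvD (x y : mv R) A : (x + y) A = x A + y A.
Proof. by rewrite ffunE. Qed.

Lemma mvZ (a : R) (x : mv R) A : (a *: x) A = a * x A.
Proof. by rewrite ffunE. Qed.

Lemma mv_ext (x y : mv R) :
  (forall b0 b1 b2, x (blade b0 b1 b2) = y (blade b0 b1 b2)) -> x = y.
Proof. by move=> eq_xy; apply/ffunP => A; rewrite (blade_of A). Qed.

Lemma gone_blade b0 b1 b2 : gone R (blade b0 b1 b2) = (~~ [|| b0, b1 | b2])%:R.
Proof. by rewrite ffunE set0_blade eq_blade; case: b0; case: b1; case: b2. Qed.

Lemma gstar_blade (x : mv R) b0 b1 b2 :
  gstar x (blade b0 b1 b2) =
  if [|| b0, b1 | b2] then - x (blade b0 b1 b2) else x (blade b0 b1 b2).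
Proof.
rewrite /gstar /gradek !ffunE card_blade scaler_regular.
by case: b0; case: b1; case: b2 => /=; ring.
Qed.

Lemma NfE (x : mv R) : Nf lam x = x e0 ^+ 2
  + lam i0 * x e1 ^+ 2 + lam i1 * x e2 ^+ 2 + lam i2 * x e3 ^+ 2
  + lam i0 * lam i1 * x e12 ^+ 2 + lam i0 * lam i2 * x e13 ^+ 2
  + lam i1 * lam i2 * x e23 ^+ 2 + lam i0 * lam i1 * lam i2 * x e123 ^+ 2.
Proof. by rewrite /Nf set0_blade bullet_e0 !gstar_blade /=; ring. Qed.

Lemma Nf_diag : Nf lam = diag_form (fun A : {set 'I_3} => \prod_(i in A) lam i).
Proof.
apply: funext => x; rewrite NfE /diag_form sum_blades !big_bool /=.
rewrite !(big_mkcond (mem (blade _ _ _))) !big_ord3 /= !inE /=; ring.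
Qed.

Lemma Nf_quad_form : is_quad_form (Nf lam).
Proof. by rewrite Nf_diag; apply: diag_form_quad. Qed.

Lemma bullet1x (x : mv R) : bullet lam (gone R) x = x.
Proof.
by apply: mv_ext; case; case; case; rewrite bulletE !gone_blade /=; ring.
Qed.

Lemma bulletx1 (x : mv R) : bullet lam x (gone R) = x.
Proof.
by apply: mv_ext; case; case; case; rewrite bulletE !gone_blade /=; ring.
Qed.

Lemma bullet_bilinear : bilinear_op (bullet lam).
Proof.
split=> a x y z; apply: mv_ext; case; case; case;
  by rewrite [RHS]mvD [in RHS]mvZ !bulletE !mvD !mvZ; ring.
Qed.

Lemma bullet_gstar (x : mv R) : bullet lam x (gstar x) = Nf lam x *: gone R.
Proof.
apply: mv_ext; case; case; case;
  by rewrite mvZ gone_blade /Nf set0_blade !bulletE !gstar_blade /=; ring.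
Qed.

(* Entry n of [t] is a pair [(s, A)]: the n-th Cayley-Dickson basis unit corresponds to [s e_A]. *)
Definition relabel (t : seq (R * {set 'I_3})) (x : mv R) : oct :=
  [ffun n : 'I_8 => (nth (0, set0) t n).1 * x (nth (0, set0) t n).2].

Definition unrelabel (t : seq (R * {set 'I_3})) (u : oct) : mv R :=
  [ffun A => \sum_(n <- [:: 0; 1; 2; 3; 4; 5; 6; 7]%N)
     ((nth (0, set0) t n).2 == A)%:R * (nth (0, set0) t n).1 * u (inord n)].

Lemma relabelE t x n : relabel t x n = (nth (0, set0) t n).1 * x (nth (0, set0) t n).2.
Proof. by rewrite ffunE. Qed.

Lemma unrelabelE t u A : unrelabel t u A = \sum_(n <- [:: 0; 1; 2; 3; 4; 5; 6; 7]%N)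
  ((nth (0, set0) t n).2 == A)%:R * (nth (0, set0) t n).1 * u (inord n).
Proof. by rewrite ffunE. Qed.

Lemma relabel_alg_iso (gam : R) t :
  cancel (relabel t) (unrelabel t) -> cancel (unrelabel t) (relabel t) ->
  (forall x y, relabel t (bullet lam x y) = cdmul gam (relabel t x) (relabel t y)) ->
  alg_iso (bullet lam) (cdmul gam).
Proof.
move=> relabelK unrelabelK relabelM; exists (relabel t); split => //.
  by exists (unrelabel t).
by move=> a x y; apply/ffunP => n; rewrite !ffunE !scaler_regular; ring.
Qed.

Ltac relabel_iso_solve :=
  lazymatch goal with
  | |- cancel (relabel _) _ =>
      move=> ?; apply: mv_ext; case; case; case;
      rewrite unrelabelE !big_cons big_nil /= !relabelE !inordK //= !eq_blade /=; ring
  | |- cancel (unrelabel _) _ =>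
      move=> ?; apply: oct_ext;
      rewrite relabelE inordK //= unrelabelE !big_cons big_nil /= !eq_blade /=; ring
  | |- forall x y, _ =>
      move=> ? ?; apply: oct_ext; rewrite cdmulE !relabelE !inordK //= !bulletE;
      repeat match goal with H : lam _ = _ |- _ => rewrite H end; ring
  end.

Lemma bullet_iso_mmm : lam i0 = -1 -> lam i1 = -1 -> lam i2 = -1 ->
  alg_iso (bullet lam) (@somul R).
Proof.
move=> l0 l1 l2; apply: (relabel_alg_iso
  (t := [:: (1, e0); (1, e12); (1, e13); (1, e23); (1, e1); (-1, e2); (-1, e3); (1, e123)]));
  relabel_iso_solve.
Qed.

Lemma bullet_iso_mmp : lam i0 = -1 -> lam i1 = -1 -> lam i2 = 1 ->
  alg_iso (bullet lam) (@somul R).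
Proof.
move=> l0 l1 l2; apply: (relabel_alg_iso
  (t := [:: (1, e0); (1, e3); (1, e12); (-1, e123); (1, e1); (-1, e13); (-1, e2); (-1, e23)]));
  relabel_iso_solve.
Qed.

Lemma bullet_iso_mpm : lam i0 = -1 -> lam i1 = 1 -> lam i2 = -1 ->
  alg_iso (bullet lam) (@somul R).
Proof.
move=> l0 l1 l2; apply: (relabel_alg_iso
  (t := [:: (1, e0); (1, e2); (1, e13); (1, e123); (1, e1); (-1, e12); (-1, e3); (1, e23)]));
  relabel_iso_solve.
Qed.

Lemma bullet_iso_mpp : lam i0 = -1 -> lam i1 = 1 -> lam i2 = 1 ->
  alg_iso (bullet lam) (@somul R).
Proof.
move=> l0 l1 l2; apply: (relabel_alg_iso
  (t := [:: (1, e0); (1, e2); (1, e3); (1, e23); (1, e1); (-1, e12); (-1, e13); (1, e123)]));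
  relabel_iso_solve.
Qed.

Lemma bullet_iso_pmm : lam i0 = 1 -> lam i1 = -1 -> lam i2 = -1 ->
  alg_iso (bullet lam) (@somul R).
Proof.
move=> l0 l1 l2; apply: (relabel_alg_iso
  (t := [:: (1, e0); (1, e1); (1, e23); (-1, e123); (1, e2); (1, e12); (-1, e3); (1, e13)]));
  relabel_iso_solve.
Qed.

Lemma bullet_iso_pmp : lam i0 = 1 -> lam i1 = -1 -> lam i2 = 1 ->
  alg_iso (bullet lam) (@somul R).
Proof.
move=> l0 l1 l2; apply: (relabel_alg_iso
  (t := [:: (1, e0); (1, e1); (1, e3); (1, e13); (1, e2); (1, e12); (-1, e23); (-1, e123)]));
  relabel_iso_solve.
Qed.

Lemma bullet_iso_pp : lam i0 = 1 -> lam i1 = 1 -> alg_iso (bullet lam) (cdmul (- lam i2)).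
Proof.
move=> l0 l1; apply: (relabel_alg_iso
  (t := [:: (1, e0); (1, e1); (1, e2); (1, e12); (1, e3); (1, e13); (1, e23); (1, e123)]));
  relabel_iso_solve.
Qed.

Hypothesis lam_sign : forall i, lam i = 1 \/ lam i = -1.

Lemma Nf_nondegenerate : nondegenerate_qf (Nf lam).
Proof.
rewrite Nf_diag; apply: diag_form_nondegenerate => A; rewrite prodf_seq_neq0.
apply/allP => i _; apply/implyP => _.
by case: (lam_sign i) => ->; rewrite ?oppr_eq0 oner_eq0.
Qed.

Lemma Nf_bullet (x y : mv R) : Nf lam (bullet lam x y) = Nf lam x * Nf lam y.
Proof.
rewrite !NfE !bulletE.
by case: (lam_sign i0) => ->; case: (lam_sign i1) => ->; case: (lam_sign i2) => ->; ring.
Qed.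

Lemma bullet_hurwitz : is_hurwitz (bullet lam) (gone R) (Nf lam).
Proof.
split; [exact: bullet_bilinear | | exact: Nf_quad_form | exact: Nf_nondegenerate
       | exact: Nf_bullet].
by move=> x; rewrite bullet1x bulletx1.
Qed.

Lemma bullet_octonion_or_split :
  alg_iso (bullet lam) (@omul R) \/ alg_iso (bullet lam) (@somul R).
Proof.
case: (lam_sign i0) => l0; case: (lam_sign i1) => l1; case: (lam_sign i2) => l2.
- by left; have := bullet_iso_pp l0 l1; rewrite l2.
- by right; have := bullet_iso_pp l0 l1; rewrite l2 opprK.
- by right; apply: bullet_iso_pmp.
- by right; apply: bullet_iso_pmm.
- by right; apply: bullet_iso_mpp.
- by right; apply: bullet_iso_mpm.
- by right; apply: bullet_iso_mmp.
- by right; apply: bullet_iso_mmm.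
Qed.

End Clifford.

Theorem theorem1 (R : realType) (lam : 'I_3 -> R)
  (hlam : forall i : 'I_3, lam i = 1 \/ lam i = -1) :
  [/\ (forall x : mv R, bullet lam x (gstar x) = Nf lam x *: gone R),
      (forall x : mv R, bullet lam (gone R) x = x /\ bullet lam x (gone R) = x),
      is_quad_form (Nf lam) /\ nondegenerate_qf (Nf lam),
      (forall x y : mv R, Nf lam (bullet lam x y) = Nf lam x * Nf lam y) &
      is_hurwitz (bullet lam) (gone R) (Nf lam) /\
      (alg_iso (bullet lam) (@omul R) \/ alg_iso (bullet lam) (@somul R))].
Proof.
split.
- exact: bullet_gstar.
- by move=> x; rewrite bullet1x bulletx1.
- by split; [apply: Nf_quad_form | apply: Nf_nondegenerate].
- exact: Nf_bullet.
- by split; [apply: bullet_hurwitz | apply: bullet_octonion_or_split].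
Qed.
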